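(* Let $Y$ be a smooth irreducible quasi-projective variety, $\mathcal{A}$ a sheaf of commutative $\mathcal{O}_Y$-algebras that is locally free of rank $d\ge 2$, and $W$ a finite-dimensional $\mathbb{Z}/d\mathbb{Z}$-graded $\mathbf{k}$-vector space. Let $\psi:\mathcal{A}\oplus\mathcal{O}_Y\{T\}\to \operatorname{End}(W\otimes\mathcal{O}_Y)$ be a graded $\chi_{\mathcal{A}}$-Roby module. Then $\psi(T)$ is invertible, and the $\mathcal{O}_Y$-linear map $C_\psi:\mathcal{A}\to\operatorname{End}(W\otimes\mathcal{O}_Y)$, $C_\psi(a) = -\psi(a)\circ\psi(T)^{-1}$, is a characteristic morphism.
   Context: For a commutative ring $R$ and an $R$-algebra $A$ free of rank $d$ over $R$, with regular representation $\rho_A:A\to\operatorname{End}_R(A)$, the characteristic polynomial is $\chi_A(t,a)=\det(tI-\rho_A(a))=\sum_{j=0}^d(-1)^j\operatorname{tr}(\wedge^j\rho_A(a))t^{d-j}$; for an $R$-algebra $B$, $b\in B$, $a\in A$, $\chi_A(b,a)$ denotes $\sum_j(-1)^j\operatorname{tr}(\wedge^j\rho_A(a))b^{d-j}\in B$. An $R$-linear map $\phi:A\to B$ is a characteristic morphism if $\chi_A(\phi(a),a)=0$ for all $a\in A$. For sheaves, $\chi_{\mathcal{A}}$ is defined globally from the regular representation of $\mathcal{A}$, and an $\mathcal{O}_Y$-linear map $\phi:\mathcal{A}\to\mathcal{B}$ to a coherent sheaf of $\mathcal{O}_Y$-algebras is a characteristic morphism if each stalk map $\phi_y$ is one. An $\mathcal{O}_Y$-linear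 map $\psi:\mathcal{A}\oplus\mathcal{O}_Y\{T\}\to\operatorname{End}(W\otimes\mathcal{O}_Y)$ (where $\mathcal{O}_Y\{T\}$ is the free rank-one module on $T$) is a $\chi_{\mathcal{A}}$-Roby module if for every $y\in Y$ and all local sections $a\in\mathcal{A}_y$, $r\in\mathcal{O}_{Y,y}$ one has $\psi(a+rT)^d=\chi_{\mathcal{A}}(r,a)\cdot\mathrm{Id}$, where $\chi_{\mathcal{A}}(r,a)=\det(r\cdot I-\rho_{\mathcal{A}}(a))$; it is graded if $W$ is $\mathbb{Z}/d\mathbb{Z}$-graded and each $\psi(a+rT)$ is homogeneous of degree $1$. The base field $\mathbf{k}$ is algebraically closed of characteristic zero. *)

From HB Require Import structures.
From mathcomp Require Import all_boot all_order all_algebra.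
Set Implicit Arguments. Unset Strict Implicit. Unset Printing Implicit Defensive.
Import Order.TTheory GRing.Theory Num.Theory.
Local Open Scope ring_scope.

Definition is_basis (R : comNzRingType) (A : lmodType R) (d : nat)
  (bA : 'I_d -> A) (cA : A -> 'rV[R]_d) : Prop :=
  (forall x : A, x = \sum_(i < d) cA x 0 i *: bA i) /\
  (forall i : 'I_d, cA (bA i) = delta_mx 0 i).

(* Matrix of the regular representation rho_A(a) in the basis bA
   (row i = coordinates of a * bA i; char. poly is transpose-invariant). *)
Definition regmx (R : comNzRingType) (A : comAlgType R) (d : nat)
  (bA : 'I_d -> A) (cA : A -> 'rV[R]_d) (a : A) : 'M[R]_d :=
  \matrix_(i < d, j < d) cA (a * bA i) 0 j.

Definition chiA (R : comNzRingType) (A : comAlgType R) (d : nat)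
  (bA : 'I_d -> A) (cA : A -> 'rV[R]_d) (a : A) : {poly R} :=
  char_poly (regmx bA cA a).

Definition mxeval (R : comNzRingType) (n : nat) (p : {poly R}) (M : 'M[R]_n)
  : 'M[R]_n := \sum_(j < size p) p`_j *: M ^+ j.

(* Homogeneous of degree 1 w.r.t. the Z/dZ-grading deg of the basis of W:
   sends W_j to W_{j+1}. *)
Definition homog1 (R : comNzRingType) (n d : nat) (deg : 'I_n -> 'Z_d)
  (M : 'M[R]_n) : Prop :=
  forall i j : 'I_n, deg i != deg j + 1 -> M i j = 0.

Definition local_ring (R : comUnitRingType) : Prop :=
  forall x y : R, x \notin GRing.unit -> y \notin GRing.unit ->
    (x + y) \notin GRing.unit.

From HB Require Import structures.
From mathcomp Require Import all_boot all_order all_algebra.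
Set Implicit Arguments. Unset Strict Implicit. Unset Printing Implicit Defensive.
Import GRing.Theory.
Local Open Scope ring_scope.

(* Since chi_A(t, 0) = t^d, the Roby relation at a = 0 gives psi(T)^d = 1, so
   psi(T) is invertible.  Fix a, write X = psi(a), T = psi(T), V = -T^-1 X, so
   that X + r T = T (r - V).  Then the matrix-coefficient polynomial
   (T (t - V))^d agrees with chi_A(t, a) at every scalar r; the scalars contain
   the integers, whose differences are invertible in characteristic zero, so the
   two polynomials are equal.  Horner evaluation keeps coefficients on the left,
   so the right factor t - V makes V a root: chi_A(V, a) = 0.  Finally
   -X T^-1 = T V T^-1 is conjugate to V. *)

Lemma natr_inj_pchar0 (F : fieldType) :
  [pchar F] =i pred0 -> injective (fun i : nat => i%:R : F).
Proof.
move=> /pcharf0P F0.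
have le_of_eq m n : (m <= n)%N -> m%:R = n%:R :> F -> (n <= m)%N.
  by move=> le_mn eq_mn; rewrite -subn_eq0 -F0 natrB // eq_mn subrr.
move=> i j /= eq_ij; apply/eqP; rewrite eqn_leq.
have [le_ij | lt_ji] := leqP i j; first by rewrite (le_of_eq i j).
by have := le_of_eq j i (ltnW lt_ji) (esym eq_ij); rewrite leqNgt lt_ji.
Qed.

Lemma poly_eq0_on_rmorph_image (F : fieldType) (S : unitRingType)
    (f : {rmorphism F -> S}) (p : {poly S}) :
  [pchar F] =i pred0 -> (forall c : F, p.[f c] = 0) -> p = 0.
Proof.
move=> F0 p_f; apply/eqP/negPn/negP => nz_p.
pose s := [seq (i%:R : F) | i <- iota 0 (size p)].
have roots_s : all (root p) (map f s).
  by apply/allP => _ /mapP[c _ ->]; apply/eqP/p_f.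
have uniq_s : uniq_roots (map f s).
  by rewrite map_uniq_roots map_inj_uniq ?iota_uniq //; exact: natr_inj_pchar0.
have := max_ring_poly_roots nz_p roots_s uniq_s.
by rewrite !size_map size_iota ltnn.
Qed.

Lemma horner_mul_XsubC (S : nzRingType) (p : {poly S}) (c : S) :
  (p * ('X - c%:P)).[c] = 0.
Proof.
rewrite hornerM_comm ?hornerXsubC ?subrr ?mulr0 //.
by rewrite /comm_poly hornerXsubC subrr mulr0 mul0r.
Qed.

Lemma horner_alg_conj (R : comNzRingType) (B : unitAlgType R) (u x : B)
    (p : {poly R}) :
  u \is a GRing.unit -> horner_alg (u * x / u) p = u * horner_alg x p / u.
Proof.
move=> u_unit; elim/poly_ind: p => [|p c IHp].
  by rewrite !rmorph0 mulr0 mul0r.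
rewrite !rmorphD !rmorphM /= !horner_algX !horner_algC IHp mulrDr mulrDl.
by rewrite !mulrA divrK // -(comm_alg c u) mulrK.
Qed.

Section RobyRelation.

Variables (F : fieldType) (R : comAlgType F) (B : unitAlgType R).
Variables (chi : {poly R}) (d : nat) (T X : B).
Hypotheses (F0 : [pchar F] =i pred0) (d_gt0 : (0 < d)%N).
Hypothesis T_unit : T \is a GRing.unit.
Hypothesis roby : forall r : R, (X + r *: T) ^+ d = chi.[r]%:A.

Let V := - (T^-1 * X).

Lemma roby_poly_identity : (T%:P * ('X - V%:P)) ^+ d = map_poly (in_alg B) chi.
Proof.
apply/eqP; rewrite -subr_eq0; apply/eqP.
apply: (@poly_eq0_on_rmorph_image F B (in_alg B \o in_alg R)) F0 _ => c /=.
set r := c%:A.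
have r_central (p : {poly B}) : comm_poly p r%:A by apply: comm_alg.
rewrite hornerD hornerN horner_exp_comm // horner_map.
rewrite hornerM_comm // hornerC hornerXsubC.
by rewrite /V opprK mulrDr mulVKr // mulr_algr [r *: T + X]addrC roby subrr.
Qed.

Lemma horner_alg_roby_root : horner_alg (- (X / T)) chi = 0.
Proof.
have -> : - (X / T) = T * V / T by rewrite /V mulrN mulVKr // mulNr.
rewrite horner_alg_conj // [horner_alg V chi]/horner_alg /horner_morph.
rewrite -roby_poly_identity.
by rewrite -(prednK d_gt0) exprSr mulrA horner_mul_XsubC mulr0 mul0r.
Qed.

End RobyRelation.

Lemma chiA0 (R : comNzRingType) (A : comAlgType R) (d : nat)
    (bA : 'I_d -> A) (cA : {linear A -> 'rV[R]_d}) :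
  chiA bA cA 0 = 'X^d.
Proof.
rewrite /chiA; have -> : regmx bA cA 0 = 0.
  by apply/matrixP => i j; rewrite !mxE mul0r linear0 mxE.
by rewrite /char_poly /char_poly_mx map_mx0 subr0 det_scalar.
Qed.

Lemma mxeval_horner_alg (R : comNzRingType) (n : nat) (p : {poly R})
    (M : 'M[R]_n.+1) :
  mxeval p M = horner_alg M p.
Proof.
rewrite /horner_alg /horner_morph (horner_coef_wide _ (size_poly _ _)).
by apply: eq_bigr => j _; rewrite coef_map_id0 ?rmorph0 // mulr_algl.
Qed.

Theorem mainTheorem3
  (k : closedFieldType) (k_char0 : [pchar k] =i pred0)
  (R : comUnitAlgType k)
  (R_domain : GRing.integral_domain_axiom R)
  (R_local : local_ring R)
  (d : nat) (d_ge2 : (2 <= d)%N)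
  (A : comAlgType R) (bA : 'I_d -> A) (cA : {linear A -> 'rV[R]_d})
  (A_free : is_basis bA cA)
  (n : nat) (deg : 'I_n -> 'Z_d)
  (psiA : {linear A -> 'M[R]_n}) (psiT : 'M[R]_n)
  (roby : forall (a : A) (r : R),
            (psiA a + r *: psiT) ^+ d = ((chiA bA cA a).[r])%:M)
  (graded : forall (a : A) (r : R), homog1 deg (psiA a + r *: psiT)) :
  psiT \in unitmx /\
  (forall a : A, mxeval (chiA bA cA a) (- (psiA a *m invmx psiT)) = 0).
Proof.
have d_gt0 : (0 < d)%N by apply: ltnW.
case: n deg psiA psiT roby graded => [|n] _ psiA psiT roby _.
  by split=> [|a]; [rewrite unitmxE det_mx00 unitr1 | apply/matrixP => -[]].
have T_unit : psiT \is a GRing.unit.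
  have := roby 0 1.
  rewrite linear0 add0r scale1r chiA0 hornerXn expr1n => T_pow_d.
  by rewrite -(unitrX_pos _ d_gt0) T_pow_d unitr1.
split=> // a; rewrite mxeval_horner_alg mulmxE.
apply: (horner_alg_roby_root k_char0 d_gt0 T_unit) => r.
by rewrite roby scalemx1.
Qed.
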